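(* Let $(R,\mathfrak m)$ be a one-dimensional Cohen–Macaulay local ring. Let $I$ be a regular trace ideal of $R$ and $J$ a regular ideal of $R$ with $J\subseteq I$, and suppose there exists $q\in I$ with $IJ=qJ$. Then $$\{X\in\mathcal T(I:I)\mid X\subseteq J:I\}=\{q^{-1}Y\mid Y\in\mathcal T(R),\ Y\subseteq J\}.$$
   Context: $Q(R)$ is the total ring of fractions; for $R$-submodules $X,Y$ of $Q(R)$, $X:Y=\{x\in Q(R)\mid xY\subseteq X\}$; $I:I$ is a subring of $Q(R)$. An ideal is regular if it contains a non-zerodivisor. For a ring $A$, the trace ideal of an $A$-module $M$ is $\mathrm{tr}_A(M)=\sum_{f\in\mathrm{Hom}_A(M,A)}\mathrm{Im}f$, an ideal is a trace ideal if it equals some $\mathrm{tr}_A(M)$, and $\mathcal T(A)$ is the set of regular trace ideals of $A$. *)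

From HB Require Import structures.
From mathcomp Require Import all_boot all_order all_algebra.
Set Implicit Arguments. Unset Strict Implicit. Unset Printing Implicit Defensive.
Import GRing.Theory.
Local Open Scope ring_scope.

Definition set_eq (T : Type) (X Y : T -> Prop) := forall x, X x <-> Y x.
Definition included (T : Type) (X Y : T -> Prop) := forall x, X x -> Y x.

Section Ring.
Variable R : comNzRingType.

Definition is_ideal (I : R -> Prop) : Prop :=
  I 0 /\ (forall x y, I x -> I y -> I (x + y)) /\ (forall r x, I x -> I (r * x)).

Definition nonzerodivisor (x : R) : Prop := forall y, x * y = 0 -> y = 0.

Definition regular_ideal (I : R -> Prop) : Prop :=
  is_ideal I /\ exists x, I x /\ nonzerodivisor x.

Definition prime_ideal (P : R -> Prop) : Prop :=
  is_ideal P /\ ~ P 1 /\ (forall a b, P (a * b) -> P a \/ P b).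

Definition strict_subset (X Y : R -> Prop) : Prop :=
  included X Y /\ exists y, Y y /\ ~ X y.

Definition prime_chain (n : nat) (P : nat -> R -> Prop) : Prop :=
  (forall i, (i <= n)%N -> prime_ideal (P i)) /\
  (forall i, (i < n)%N -> strict_subset (P i) (P i.+1)).

Definition krull_dim (n : nat) : Prop :=
  (exists P, prime_chain n P) /\ ~ (exists P, prime_chain n.+1 P).

Definition gen_by (s : seq R) (x : R) : Prop :=
  exists c : 'I_(size s) -> R, x = \sum_(i < size s) c i * s`_i.

Definition noetherian : Prop :=
  forall I, is_ideal I -> exists s : seq R, set_eq I (gen_by s).

Definition regular_seq (m : R -> Prop) (s : seq R) : Prop :=
  (forall i, (i < size s)%N -> m s`_i) /\
  (forall i, (i < size s)%N -> forall y,
      gen_by (take i s) (s`_i * y) -> gen_by (take i s) y) /\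
  ~ gen_by s 1.

Definition ideal_mul (I J : R -> Prop) (x : R) : Prop :=
  exists n (a b : 'I_n -> R), (forall i, I (a i) /\ J (b i)) /\
    x = \sum_(i < n) a i * b i.

Definition scale_set (q : R) (J : R -> Prop) (x : R) : Prop :=
  exists j, J j /\ x = q * j.

Definition hom_to_ring (M : lmodType R) (h : M -> R) : Prop :=
  forall (c : R) (u v : M), h (c *: u + v) = c * h u + h v.

Definition trace_of (M : lmodType R) (a : R) : Prop :=
  exists n (fs : 'I_n -> M -> R) (ms : 'I_n -> M),
    (forall i, hom_to_ring (fs i)) /\ a = \sum_(i < n) fs i (ms i).

Definition is_trace_ideal (X : R -> Prop) : Prop :=
  exists M : lmodType R, set_eq X (trace_of M).

Definition regular_trace_ideal (X : R -> Prop) : Prop :=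
  regular_ideal X /\ is_trace_ideal X.

End Ring.

Section Local.
Variable R : comUnitRingType.

Definition local_ring (m : R -> Prop) : Prop :=
  is_ideal m /\ ~ m 1 /\ (forall x, ~ m x -> x \is a GRing.unit).

(* Cohen-Macaulay local ring of dimension d : depth = dim = d, i.e. there is
   an R-regular sequence of length d in m *)
Definition cohen_macaulay_local (m : R -> Prop) (d : nat) : Prop :=
  noetherian R /\ local_ring m /\ krull_dim R d /\
  exists s, size s = d /\ regular_seq m s.
End Local.

Definition total_ring_of_fractions (R Q : comUnitRingType)
  (f : {rmorphism R -> Q}) : Prop :=
  injective f /\
  (forall s, nonzerodivisor s -> f s \is a GRing.unit) /\
  (forall x : Q, exists a s, nonzerodivisor s /\ x * f s = f a).

Definition img (T U : Type) (f : T -> U) (X : T -> Prop) (z : U) : Prop :=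
  exists x, X x /\ z = f x.

Definition colon (Q : comNzRingType) (X Y : Q -> Prop) (x : Q) : Prop :=
  forall y, Y y -> X (x * y).

From HB Require Import structures.
From mathcomp Require Import all_boot all_order all_algebra.
From mathcomp Require boolp.
From mathcomp Require Import ring.

(* For an ideal X of a subring S of Q(R) containing a unit of Q(R), every
   S-linear map X -> S is multiplication by an element of Q(R), so X is a trace
   ideal iff S : X = X : X.  Let B = I : I.  As q lies in I and IJ = qJ, we get
   J : I = q^-1 J ⊆ B, so every Z ⊆ J : I is both a subset X = Z of B and
   q^-1 Y for Y = qZ ⊆ J.  "X is a regular trace ideal of B" and "Y is a
   regular trace ideal of R" both become conditions on Z: Z contains a unit
   and is a B-module with B : Z = Z : Z, resp. an R-module with
   q^-1 R : Z = Z : Z.  These agree because q ∈ I and R : I = I : I. *)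
Set Implicit Arguments. Unset Strict Implicit. Unset Printing Implicit Defensive.
Import GRing.Theory.
Local Open Scope ring_scope.

Local Notation range h := (img h (fun _ => True)).

Lemma set_ext (T : Type) (X Y : T -> Prop) : set_eq X Y -> X = Y.
Proof. by move=> XY; apply: boolp.funext => x; apply: boolp.propext. Qed.

Lemma mem_img (T U : Type) (h : T -> U) (X : T -> Prop) x : X x -> img h X (h x).
Proof. by exists x. Qed.

Lemma mem_range (T U : Type) (h : T -> U) x : range h (h x).
Proof. by exists x. Qed.

Lemma img_preim (T U : Type) (h : T -> U) (Z : U -> Prop) :
  included Z (range h) -> img h (fun x => Z (h x)) = Z.
Proof.
move=> Zh; apply: set_ext => z; split=> [[x [Zx ->]] // | Zz].
by have [x [_ zE]] := Zh z Zz; exists x; rewrite -zE.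
Qed.

Section IdealModule.
Variables (S : comNzRingType) (X : S -> Prop).

(* The proof of [is_ideal X] is a dummy argument, so that the submodule
   structure below can be found by unification. *)
Definition ideal_mem (X_ideal : is_ideal X) : pred S^o := fun x => boolp.asbool (X x).

Hypothesis X_ideal : is_ideal X.

Fact ideal_mem_submod_closed : subsemimod_closed (ideal_mem X_ideal).
Proof.
case: X_ideal => X0 [XD XM]; split; first split.
- exact/boolp.asboolP.
- by move=> u v /boolp.asboolP Xu /boolp.asboolP Xv; apply/boolp.asboolP/XD.
- by move=> a u /boolp.asboolP Xu; apply/boolp.asboolP/XM.
Qed.

HB.instance Definition _ := GRing.isSubmodClosed.Build S S^o (ideal_mem X_ideal)
  ideal_mem_submod_closed.

Definition ideal_module := {x : S^o | ideal_mem X_ideal x}.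
HB.instance Definition _ := [isSub for (@sval _ (ideal_mem X_ideal) : ideal_module -> S^o)].
HB.instance Definition _ := [Choice of ideal_module by <:].
HB.instance Definition _ := [SubChoice_isSubLmodule of ideal_module by <:].

Lemma ideal_moduleP (u : ideal_module) : X (val u).
Proof. exact/boolp.asboolP/(valP u). Qed.

Definition ideal_elem x (Xx : X x) : ideal_module := Sub x (boolp.asboolT Xx).

Lemma hom_to_ring_val : hom_to_ring (val : ideal_module -> S).
Proof. by move=> a u v; rewrite linearP. Qed.

End IdealModule.

Section Homs.
Variables (S : comNzRingType) (M : lmodType S) (phi : M -> S).
Hypothesis phi_hom : hom_to_ring phi.

Lemma hom_to_ring0 : phi 0 = 0.
Proof.
have E := phi_hom 1 0 0; rewrite scaler0 add0r mul1r in E.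
by apply: (addrI (phi 0)); rewrite addr0 -E.
Qed.

Lemma hom_to_ringZ a u : phi (a *: u) = a * phi u.
Proof. by rewrite -[a *: u]addr0 phi_hom hom_to_ring0 addr0. Qed.

Lemma trace_of_hom u : trace_of M (phi u).
Proof. by exists 1%N, (fun _ => phi), (fun _ => u); rewrite big_ord1. Qed.

End Homs.

Section Submodules.
Variable Q : comNzRingType.
Implicit Types B Z : Q -> Prop.

Definition is_submodule B Z :=
  Z 0 /\ (forall x y, Z x -> Z y -> Z (x + y)) /\
  (forall b z, B b -> Z z -> Z (b * z)).

(* [B : Z = Z : Z]; the inclusion [Z : Z ⊆ B : Z] holds as soon as [Z ⊆ B]. *)
Definition colon_closed B Z := included (colon B Z) (colon Z Z).

Lemma is_submoduleS B B' Z :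
  included B' B -> is_submodule B Z -> is_submodule B' Z.
Proof. by move=> B'B [Z0 [ZD ZM]]; do 2!split=> //; move=> b z /B'B; apply: ZM. Qed.

Lemma is_submodule_scale B Z u : is_submodule B Z -> is_submodule B (scale_set u Z).
Proof.
move=> [Z0 [ZD ZM]]; split; first by exists 0; rewrite mulr0.
split=> [_ _ [x [Zx ->]] [y [Zy ->]] | b _ Bb [z [Zz ->]]].
  by exists (x + y); rewrite mulrDr; split=> //; apply: ZD.
by exists (b * z); rewrite mulrCA; split=> //; apply: ZM.
Qed.

End Submodules.

Section Scaling.
Variables (Q : comUnitRingType) (u : Q).
Hypothesis u_unit : u \is a GRing.unit.
Implicit Types B Z : Q -> Prop.

Lemma scale_setVK Z : scale_set u (scale_set u^-1 Z) = Z.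
Proof.
apply: set_ext => z; split=> [[_ [[y [Zy ->]] ->]] | Zz]; first by rewrite mulVKr.
by exists (u^-1 * z); split; [exists z | rewrite mulVKr].
Qed.

Lemma colon_closed_scale B Z :
  colon_closed B Z -> colon_closed (scale_set u B) (scale_set u Z).
Proof.
move=> BZ c cB _ [z [Zz ->]]; exists (c * z); rewrite mulrCA; split=> //.
apply: BZ => // y Zy; have [b [Bb]] := cB (u * y) (mem_img _ Zy).
by rewrite mulrCA => /(mulrI u_unit) ->.
Qed.

End Scaling.

Section TraceCriterion.
Variables (S : comNzRingType) (Q : comUnitRingType) (h : {rmorphism S -> Q}).
Hypothesis h_inj : injective h.

Lemma unit_nonzerodivisor s : h s \is a GRing.unit -> nonzerodivisor s.
Proof.
move=> hs y /(congr1 h); rewrite rmorphM rmorph0 => /(congr1 (GRing.mul (h s)^-1)).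
by rewrite mulKr // mulr0 -(rmorph0 h) => /h_inj.
Qed.

Lemma ideal_img X : is_ideal X <-> is_submodule (range h) (img h X).
Proof.
split=> [[X0 [XD XM]] | [hX0 [hXD hXM]]].
  split; first by exists 0; rewrite rmorph0.
  split=> [_ _ [x [Xx ->]] [y [Xy ->]] | _ _ [r [_ ->]] [x [Xx ->]]].
    by exists (x + y); rewrite rmorphD; split=> //; apply: XD.
  by exists (r * x); rewrite rmorphM; split=> //; apply: XM.
have hX x : img h X (h x) -> X x by move=> [y [Xy /h_inj ->]].
split; first by apply: hX; rewrite rmorph0.
split=> [x y Xx Xy | r x Xx]; apply: hX.
  by rewrite rmorphD; apply: hXD; [exists x | exists y].
by rewrite rmorphM; apply: hXM; [exists r | exists x].
Qed.

Lemma hom_to_ring_mul (M : lmodType S) (phi : M -> S) c :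
  hom_to_ring phi -> (forall v, range h (c * h (phi v))) ->
  exists psi, hom_to_ring psi /\ forall v, h (psi v) = c * h (phi v).
Proof.
move=> phi_hom /boolp.choice [psi psiE].
have {}psiE v : h (psi v) = c * h (phi v) by case: (psiE v).
exists psi; split=> // a v w; apply: h_inj.
by rewrite rmorphD rmorphM !psiE phi_hom rmorphD rmorphM mulrDr mulrCA.
Qed.

Lemma trace_ideal_colon_closed X :
  is_trace_ideal X -> colon_closed (range h) (img h X).
Proof.
move=> [M /set_ext ->] c cX _ [_ [[n [fs [ms [fs_hom ->]]]] ->]].
have /boolp.choice [psi psiP] i :
    exists psi, hom_to_ring psi /\ forall v, h (psi v) = c * h (fs i v).
  apply: hom_to_ring_mul => // v; apply: cX.
  by exists (fs i v); split=> //; apply: trace_of_hom.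
exists (\sum_i psi i (ms i)); split.
  by exists n, psi, ms; split=> // i; case: (psiP i).
by rewrite !rmorph_sum mulr_sumr; apply: eq_bigr => i _; case: (psiP i).
Qed.

Section IdealHoms.
Variables (X : S -> Prop) (X_ideal : is_ideal X) (x0 : S) (Xx0 : X x0).
Hypothesis hx0_unit : h x0 \is a GRing.unit.
Let x0' := ideal_elem X_ideal Xx0.

(* [phi (x0 v) = phi (v x0)], and [h x0] is invertible. *)
Lemma ideal_hom_mul (phi : ideal_module X_ideal -> S) v : hom_to_ring phi ->
  h (phi v) = (h x0)^-1 * h (phi x0') * h (val v).
Proof.
move=> phi_hom; have /(congr1 (h \o phi)) /= : x0 *: v = (val v : S) *: x0'.
  by apply: val_inj; rewrite !linearZ /=; apply: mulrC.
by rewrite !(hom_to_ringZ phi_hom) !rmorphM -mulrA (mulrC (h (phi _))) => <-; rewrite mulKr.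
Qed.

Lemma colon_closed_trace_ideal :
  colon_closed (range h) (img h X) -> is_trace_ideal X.
Proof.
move=> Xcc; exists (ideal_module X_ideal) => x.
split=> [Xx | [n [fs [ms [fs_hom ->]]]]].
  exact: trace_of_hom (@hom_to_ring_val _ _ X_ideal) (ideal_elem X_ideal Xx).
have fsX i v : X (fs i v).
  have fsE w := ideal_hom_mul w (fs_hom i).
  have cX : colon (range h) (img h X) ((h x0)^-1 * h (fs i x0')).
    by move=> _ [y [Xy ->]]; exists (fs i (ideal_elem X_ideal Xy)); split=> //; rewrite fsE.
  have [y [Xy]] := Xcc _ cX (h (val v)) (mem_img h (ideal_moduleP v)).
  by rewrite -fsE => /h_inj ->.
case: X_ideal => X0 [XD _]; elim/big_ind: _ => //.
Qed.

End IdealHoms.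

Lemma regular_trace_ideal_img X :
  (exists x, X x /\ h x \is a GRing.unit) ->
  regular_trace_ideal X <->
  is_submodule (range h) (img h X) /\ colon_closed (range h) (img h X).
Proof.
move=> [x0 [Xx0 hx0]]; split=> [[[X_ideal _] X_trace] | [Xsub Xcc]].
  by split; [apply/ideal_img | apply: trace_ideal_colon_closed].
have X_ideal : is_ideal X by apply/ideal_img.
split; first by split=> //; exists x0; split=> //; apply: unit_nonzerodivisor.
exact: colon_closed_trace_ideal Xx0 hx0 Xcc.
Qed.

End TraceCriterion.

Section NonZeroDivisors.
Variable S : comNzRingType.

Lemma nonzerodivisorM (a b : S) :
  nonzerodivisor a -> nonzerodivisor b -> nonzerodivisor (a * b).
Proof. by move=> a_nzd b_nzd y; rewrite -mulrA => /a_nzd /b_nzd. Qed.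

Lemma mul_in_ideal_mul (I J : S -> Prop) i j : I i -> J j -> ideal_mul I J (i * j).
Proof. by exists 1%N, (fun _ => i), (fun _ => j); rewrite big_ord1. Qed.

Lemma ideal_mul_scale_nonzerodivisor (I J : S -> Prop) q :
  regular_ideal I -> regular_ideal J ->
  included (ideal_mul I J) (scale_set q J) -> nonzerodivisor q.
Proof.
move=> [_ [i [Ii i_nzd]]] [_ [j [Jj j_nzd]]] IJ y qy.
have [j' [_ ijE]] := IJ _ (mul_in_ideal_mul Ii Jj).
by apply: (nonzerodivisorM i_nzd j_nzd); rewrite ijE mulrAC qy mul0r.
Qed.

End NonZeroDivisors.

Lemma nonzerodivisor_subring (R A Q : comNzRingType)
    (f : {rmorphism R -> Q}) (g : {rmorphism A -> Q}) a y :
  injective f -> injective g -> included (range f) (range g) ->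
  g a = f y -> nonzerodivisor a -> nonzerodivisor y.
Proof.
move=> f_inj g_inj fg gaE a_nzd z yz.
have [b [_ fzE]] := fg (f z) (mem_range f z).
apply: f_inj; rewrite fzE (a_nzd b) ?rmorph0 //; apply: g_inj.
by rewrite rmorphM rmorph0 -fzE gaE -rmorphM yz rmorph0.
Qed.

Section ColonCorrespondence.
Variables (R Q : comUnitRingType) (f : {rmorphism R -> Q}).
Variables (A : comNzRingType) (g : {rmorphism A -> Q}).
Variables (I J : R -> Prop) (q : R).
Hypotheses (f_inj : injective f) (g_inj : injective g).
Hypothesis f_unit : forall s, nonzerodivisor s -> f s \is a GRing.unit.
Hypothesis range_g : range g = colon (img f I) (img f I).
Hypothesis I_ideal : is_ideal I.
Hypothesis I_colon_closed : colon_closed (range f) (img f I).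
Hypotheses (J_sub_I : included J I) (Iq : I q).
Hypothesis IJ : included (ideal_mul I J) (scale_set q J).
Hypothesis q_nzd : nonzerodivisor q.

Let q_unit : f q \is a GRing.unit := f_unit q_nzd.
Local Notation qi := (f q)^-1.
Let qi_unit : qi \is a GRing.unit. Proof. by rewrite unitrV. Qed.
Local Notation JcolI := (colon (img f J) (img f I)).

Lemma range_f_sub_g : included (range f) (range g).
Proof.
rewrite range_g => _ [r [_ ->]] _ [i [Ii ->]].
by exists (r * i); rewrite rmorphM; split=> //; apply: I_ideal.2.2.
Qed.

Lemma colon_JI_eq : JcolI = scale_set qi (img f J).
Proof.
apply: set_ext => z; split=> [zJ | [_ [[y [Jy ->]] ->]] _ [i [Ii ->]]].
  have [j [Jj zqE]] := zJ (f q) (mem_img f Iq).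
  by exists (f j); split; [exists j | rewrite -zqE mulrCA mulVr // mulr1].
have [j [Jj iyE]] := IJ (mul_in_ideal_mul Ii Jy).
by exists j; split=> //; rewrite -mulrA -rmorphM (mulrC y) iyE rmorphM mulKr.
Qed.

Lemma colon_JI_sub_range_g : included JcolI (range g).
Proof.
rewrite range_g => z zJ _ [i [Ii ->]].
by have [j [Jj ->]] := zJ (f i) (mem_img f Ii); exists j; split=> //; apply: J_sub_I.
Qed.

Lemma g_unit_colon_JI a : nonzerodivisor a -> JcolI (g a) -> g a \is a GRing.unit.
Proof.
rewrite colon_JI_eq => a_nzd [_ [[y [Jy ->]] gaE]].
have [c [_ qcE]] := range_f_sub_g (mem_range f q).
have c_nzd : nonzerodivisor c by apply: (unit_nonzerodivisor g_inj); rewrite -qcE.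
have y_nzd : nonzerodivisor y.
  apply: (nonzerodivisor_subring f_inj g_inj range_f_sub_g _ (nonzerodivisorM a_nzd c_nzd)).
  by rewrite rmorphM gaE -qcE mulrAC mulVr ?mul1r.
by rewrite gaE unitrM qi_unit f_unit.
Qed.

Lemma colon_closed_range_g_f Z : included Z JcolI ->
  colon_closed (range g) Z <-> colon_closed (scale_set qi (range f)) Z.
Proof.
move=> ZJ; split=> Zcc c cZ.
- have IZ i z' : I i -> Z z' -> Z (qi * f i * z').
    move=> Ii; apply: Zcc => {}z' Zz'; apply: colon_JI_sub_range_g.
    have [j [Jj jE]] := ZJ z' Zz' (f i) (mem_img f Ii).
    by rewrite colon_JI_eq; exists (f j); split; [exact: mem_img | rewrite -jE; ring].
  apply: Zcc => // z Zz; rewrite range_g; apply: I_colon_closed => _ [i [Ii ->]].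
  have [_ [[r [_ ->]] rE]] := cZ _ (IZ i z Ii Zz).
  exists r; split=> //; apply: (mulrI qi_unit); rewrite -rE; ring.
- apply: Zcc => // z Zz; move: (cZ z Zz); rewrite range_g => czI.
  have [i [_ iE]] := czI (f q) (mem_img f Iq).
  by exists (f i); split; [exact: mem_range | rewrite -iE [RHS]mulrC mulrK].
Qed.

Lemma is_submodule_range_g Z : included Z JcolI ->
  colon_closed (scale_set qi (range f)) Z ->
  is_submodule (range f) Z -> is_submodule (range g) Z.
Proof.
move=> ZJ Zcc [Z0 [ZD _]]; do 2!split=> //; move=> b z gb Zz.
apply: Zcc Zz => z' Zz'; have [j [Jj jE]] := ZJ z' Zz' (f q) (mem_img f Iq).
move: gb; rewrite range_g => /(_ (f j) (mem_img f (J_sub_I Jj))) [i [_ iE]].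
exists (f i); split; first exact: mem_range.
by rewrite -iE -jE -[LHS](mulKr q_unit); congr (_ * _); ring.
Qed.

Lemma regular_trace_ideal_img_g X : included (img g X) JcolI ->
  regular_trace_ideal X <->
  (exists z, img g X z /\ z \is a GRing.unit) /\
  is_submodule (range g) (img g X) /\ colon_closed (range g) (img g X).
Proof.
move=> XJ; split=> [Xrt | [[_ [[a [Xa ->]] ga_unit]] Xcc]].
  have [[_ [a [Xa a_nzd]]] _] := Xrt.
  have ga_unit := g_unit_colon_JI a_nzd (XJ _ (mem_img g Xa)).
  split; first by exists (g a); split=> //; apply: mem_img.
  by apply/(regular_trace_ideal_img g_inj _).1 => //; exists a.
by apply/(regular_trace_ideal_img g_inj _).2 => //; exists a.
Qed.

Lemma regular_trace_ideal_img_f Y Z : Z = img (fun y => qi * f y) Y ->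
  regular_trace_ideal Y <->
  (exists z, Z z /\ z \is a GRing.unit) /\
  is_submodule (range f) Z /\ colon_closed (scale_set qi (range f)) Z.
Proof.
have -> : img (fun y => qi * f y) Y = scale_set qi (img f Y).
  apply: set_ext => z; split=> [[y [Yy ->]] | [_ [[y [Yy ->]] ->]]]; last by exists y.
  by exists (f y); split; [apply: mem_img|].
move=> ->; have Yunit : (exists y, Y y /\ f y \is a GRing.unit) <->
    exists z, scale_set qi (img f Y) z /\ z \is a GRing.unit.
  split=> [[y [Yy fy_unit]] | [_ [[_ [[y [Yy ->]] ->]] z_unit]]].
    by exists (qi * f y); split; [exists (f y); split; [apply: mem_img|] | rewrite unitrM qi_unit].
  by exists y; split=> //; rewrite -(mulVKr q_unit (f y)) unitrM q_unit.
split=> [Yrt | [/Yunit Yu [Ysub Ycc]]].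
  have [[_ [y [Yy y_nzd]]] _] := Yrt.
  have Yu : exists y, Y y /\ f y \is a GRing.unit by exists y; split=> //; apply: f_unit.
  have [Ysub Ycc] := (regular_trace_ideal_img f_inj Yu).1 Yrt.
  split; first exact/Yunit.
  by split; [apply: is_submodule_scale | apply: colon_closed_scale].
apply/(regular_trace_ideal_img f_inj Yu).2.
rewrite -(scale_setVK q_unit (img f Y)); split; first exact: is_submodule_scale.
by rewrite -[range f](scale_setVK q_unit); apply: colon_closed_scale.
Qed.

Lemma submodule_colon_closed_g_f Z : included Z JcolI ->
  is_submodule (range g) Z /\ colon_closed (range g) Z <->
  is_submodule (range f) Z /\ colon_closed (scale_set qi (range f)) Z.
Proof.
move=> ZJ; split=> [[Zsub Zcc] | [Zsub Zcc]].
  by split; [apply: is_submoduleS range_f_sub_g Zsub | apply/colon_closed_range_g_f].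
by split; [apply: is_submodule_range_g | apply/colon_closed_range_g_f].
Qed.

Theorem colon_trace_ideal_correspondence (Z : Q -> Prop) :
  (exists X : A -> Prop, regular_trace_ideal X /\ set_eq (img g X) Z /\
      included Z JcolI) <->
  (exists Y : R -> Prop, regular_trace_ideal Y /\ included Y J /\
      set_eq Z (img (fun y => qi * f y) Y)).
Proof.
split=> [[X [Xrt [/set_ext gXE ZJ]]] | [Y [Yrt [YJ /set_ext ZE]]]].
  have ZE : img (fun y => qi * f y) (fun y => Z (qi * f y)) = Z.
    apply: img_preim => z /ZJ; rewrite colon_JI_eq => -[_ [[y [_ ->]] ->]].
    exact: mem_range.
  exists (fun y => Z (qi * f y)); split; last split.
  - apply/(regular_trace_ideal_img_f (esym ZE)).
    rewrite -submodule_colon_closed_g_f // -gXE.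
    by apply/regular_trace_ideal_img_g; rewrite ?gXE.
  - move=> y /ZJ; rewrite colon_JI_eq => -[_ [[j [Jj ->]]]].
    by move/(mulrI qi_unit)/f_inj ->.
  - by rewrite ZE.
have ZJ : included Z JcolI.
  by rewrite ZE colon_JI_eq => _ [y [Yy ->]]; exists (f y); split; [apply/mem_img/YJ|].
have gXE : img g (fun a => Z (g a)) = Z.
  by apply: img_preim => z /ZJ /colon_JI_sub_range_g.
exists (fun a => Z (g a)); split; last by rewrite gXE.
apply/regular_trace_ideal_img_g; rewrite gXE //.
have [Zunit ZfP] := (regular_trace_ideal_img_f ZE).1 Yrt.
by split; last apply/submodule_colon_closed_g_f.
Qed.

End ColonCorrespondence.

Theorem proposition2p5
  (R : comUnitRingType) (m : R -> Prop)
  (Q : comUnitRingType) (f : {rmorphism R -> Q})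
  (A : comNzRingType) (g : {rmorphism A -> Q})
  (I J : R -> Prop) (q : R) :
  cohen_macaulay_local m 1 ->
  total_ring_of_fractions f ->
  (* A with the embedding g is the ring I : I inside Q(R) *)
  injective g ->
  set_eq (img g (fun _ => True)) (colon (img f I) (img f I)) ->
  regular_trace_ideal I ->
  regular_ideal J -> included J I ->
  I q -> set_eq (ideal_mul I J) (scale_set q J) ->
  forall Z : Q -> Prop,
    (exists X : A -> Prop, regular_trace_ideal X /\ set_eq (img g X) Z /\
        included Z (colon (img f J) (img f I)))
    <->
    (exists Y : R -> Prop, regular_trace_ideal Y /\ included Y J /\
        set_eq Z (img (fun y => (f q)^-1 * f y) Y)).
Proof.
move=> _ [f_inj [f_unit _]] g_inj /set_ext range_g [I_reg I_trace] J_reg J_sub_I Iq IJ.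
have IJ_sub : included (ideal_mul I J) (scale_set q J) by move=> x /IJ.
apply: colon_trace_ideal_correspondence => //.
- exact: I_reg.1.
- exact: trace_ideal_colon_closed.
- exact: ideal_mul_scale_nonzerodivisor I_reg J_reg IJ_sub.
Qed.
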